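(* Let $G$ be a simple graph with edge set $E(G)=\{e_1,\ldots,e_r\}$ and let $s\geq 1$ be an integer. Then for any product $u=e_{i_1}\cdots e_{i_s}$ of $s$ (not necessarily distinct) edges, we have $$\big(I(G)^{(s+1)}:u\big)=\Big(\big(I(G)^{(2)}:e_{i_1}\big)^{(s)}: e_{i_2}\cdots e_{i_s}\Big).$$
   Context: $S=\mathbb{K}[x_1,\dots,x_n]$ over a field $\mathbb{K}$; vertices of $G$ are the variables and edges are identified with quadratic squarefree monomials. $I(G)$ is the edge ideal generated by the edges. For a squarefree monomial ideal $J$ with irredundant decomposition $J=\mathfrak{p}_1\cap\dots\cap\mathfrak{p}_r$ into monomial primes, $J^{(s)}=\mathfrak{p}_1^s\cap\dots\cap\mathfrak{p}_r^s$; in particular $I(G)^{(s)}=\bigcap_{C\in\mathcal{C}(G)}\mathfrak{p}_C^s$, where $\mathcal{C}(G)$ is the set of minimal vertex covers of $G$ and $\mathfrak{p}_C$ is generated by the variables in $C$. (Note $(I(G)^{(2)}:e)$ is a squarefree monomial ideal, so its symbolic power is defined in this way.) *)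

(* Monomial ideals of S = K[x_0..x_{n-1}] are modelled by their
   sets of monomials (exponent vectors 'I_n -> nat). *)
From mathcomp Require Import all_boot.
Set Implicit Arguments. Unset Strict Implicit. Unset Printing Implicit Defensive.

Definition mono (n : nat) := 'I_n -> nat.
Definition mideal (n : nat) := mono n -> Prop.

Definition mmul n (a b : mono n) : mono n := fun k => a k + b k.
Definition mone n : mono n := fun _ => 0.
Definition edge_mono n (ij : 'I_n * 'I_n) : mono n :=
  fun k => (k == ij.1) + (k == ij.2).
Definition edges_prod n (es : seq ('I_n * 'I_n)) : mono n :=
  foldr (fun ij acc => mmul (edge_mono ij) acc) (@mone n) es.

Definition simple_graph n (e : rel 'I_n) := irreflexive e /\ symmetric e.

Definition edge_ideal n (e : rel 'I_n) : mideal n :=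
  fun m => exists i j, e i j /\ 0 < m i /\ 0 < m j.

Definition colon n (J : mideal n) (u : mono n) : mideal n := fun m => J (mmul m u).

(* power of the monomial prime p_C: monomials of degree >= s in the variables of C *)
Definition primepow n (C : {set 'I_n}) (s : nat) : mideal n :=
  fun m => s <= \sum_(i in C) m i.

Definition vertex_cover n (e : rel 'I_n) (C : {set 'I_n}) :=
  forall i j, e i j -> i \in C \/ j \in C.
Definition min_vertex_cover n (e : rel 'I_n) (C : {set 'I_n}) :=
  vertex_cover e C /\ forall D : {set 'I_n}, D \proper C -> ~ vertex_cover e D.

(* I(G)^(s) = intersection over minimal vertex covers C of p_C^s *)
Definition edge_symb n (e : rel 'I_n) (s : nat) : mideal n :=
  fun m => forall C, min_vertex_cover e C -> primepow C s m.

Definition prime_contains n (J : mideal n) (C : {set 'I_n}) :=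
  forall m, J m -> exists2 i, i \in C & 0 < m i.
(* minimal monomial primes of J (for squarefree J these are exactly the
   primes of its irredundant primary decomposition) *)
Definition min_prime n (J : mideal n) (C : {set 'I_n}) :=
  prime_contains J C /\ forall D : {set 'I_n}, D \proper C -> ~ prime_contains J D.
Definition sqfree_symb n (J : mideal n) (s : nat) : mideal n :=
  fun m => forall C, min_prime J C -> primepow C s m.

From mathcomp Require Import all_boot.
From mathcomp Require Import zify.
From Stdlib Require Import Classical.

(* Write deg_C(m) for the total degree of the monomial m in the
   variables of C, so that m lies in p_C^s iff s <= deg_C(m), and deg_C is
   additive on products.  Let e = e_{i_1} = x_a x_b and J = (I(G)^(2) : e).
   The heart of the proof is the description of the minimal primes of J:
     p_C is a minimal prime of J  iff  C is a minimal vertex cover of G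
     that does not contain both endpoints a, b of e.
   Both directions rest on one test monomial: for D a set of variables, the
   product of the variables outside D lies in J exactly when every minimal
   vertex cover C either leaves D or contains both a and b; and it never lies
   in J when p_D contains J.
   With this description the theorem is degree counting: a minimal vertex
   cover C meets e in one or two vertices.  If one, C indexes a component of
   J^(s) and deg_C(e) = 1 shifts the exponent s+1 to s; if two, the s-1
   remaining edges already give deg_C(u) >= 2 + (s-1) = s+1. *)

Set Implicit Arguments.
Unset Strict Implicit.
Unset Printing Implicit Defensive.

Section Degrees.
Variable n : nat.
Implicit Types (C D : {set 'I_n}) (m : mono n).

Definition cdeg C m : nat := \sum_(k in C) m k.

Definition compl_ind D : mono n := fun k => k \notin D.

Lemma primepowE C s m : primepow C s m = (s <= cdeg C m).
Proof. by []. Qed.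

Lemma edges_prod_cons (ij : 'I_n * 'I_n) es :
  edges_prod (ij :: es) = mmul (edge_mono ij) (edges_prod es).
Proof. by []. Qed.

Lemma cdeg_mul C x y : cdeg C (mmul x y) = cdeg C x + cdeg C y.
Proof. by rewrite /cdeg /mmul big_split. Qed.

Lemma cdeg_var C (i : 'I_n) : \sum_(k in C) ((k == i) : nat) = (i \in C).
Proof.
case iC: (i \in C); last first.
  by rewrite big1 // => k kC; case: eqP => // ki; rewrite -ki kC in iC.
by rewrite (bigD1 i) //= eqxx big1 // => k /andP[_ /negbTE ->].
Qed.

Lemma cdeg_edge C (ij : 'I_n * 'I_n) :
  cdeg C (edge_mono ij) = (ij.1 \in C) + (ij.2 \in C).
Proof. by rewrite /cdeg /edge_mono big_split /= !cdeg_var. Qed.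

Lemma cdeg_ge C m k : k \in C -> m k <= cdeg C m.
Proof. by move=> kC; rewrite /cdeg (bigD1 k) //= leq_addr. Qed.

Lemma cdeg_support C m : 0 < cdeg C m -> exists2 k, k \in C & 0 < m k.
Proof.
case: (pickP (fun k => (k \in C) && (0 < m k))) => [k /andP[kC mk] _|none].
  by exists k.
by rewrite /cdeg big1 // => k kC; have := none k; rewrite kC; case: (m k).
Qed.

Lemma cdeg_compl_ind C D : ~~ (C \subset D) -> 1 <= cdeg C (compl_ind D).
Proof.
case/subsetPn => k kC kD.
by have := cdeg_ge (compl_ind D) kC; rewrite /compl_ind kD.
Qed.

Lemma compl_ind_notin (J : mideal n) D : prime_contains J D -> ~ J (compl_ind D).
Proof. by move=> pD /pD [k kD]; rewrite /compl_ind kD. Qed.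

End Degrees.

Section Covers.
Variables (n : nat) (e : rel 'I_n).
Implicit Types (C D : {set 'I_n}).

Lemma cover_meets_edge C (ij : 'I_n * 'I_n) : vertex_cover e C -> e ij.1 ij.2 ->
  1 <= (ij.1 \in C) + (ij.2 \in C).
Proof. by move=> cC /cC [] ->; rewrite ?addn1. Qed.

Lemma cover_cdeg_edges C es : vertex_cover e C ->
  all (fun ij => e ij.1 ij.2) es -> size es <= cdeg C (edges_prod es).
Proof.
move=> cC; elim: es => [|ij es IH] // /andP[hij hes].
rewrite edges_prod_cons cdeg_mul cdeg_edge.
exact: leq_add (cover_meets_edge cC hij) (IH hes).
Qed.

Lemma cover_superset C D : vertex_cover e D -> D \subset C -> vertex_cover e C.
Proof. by move=> cD /subsetP sDC x y /cD [] /sDC; [left|right]. Qed.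

End Covers.

Section ColonByEdge.
Variables (n : nat) (e : rel 'I_n) (a : 'I_n * 'I_n).
Hypothesis ha : e a.1 a.2.
Implicit Types (C D : {set 'I_n}) (m : mono n).

Definition both_ends C := (a.1 \in C) && (a.2 \in C).

Let J := colon (edge_symb e 2) (edge_mono a).

Lemma memJ m : J m <-> forall C, min_vertex_cover e C ->
  2 <= cdeg C m + ((a.1 \in C) + (a.2 \in C)).
Proof. by split=> H C /H; rewrite /primepow -/(cdeg _ _) cdeg_mul cdeg_edge. Qed.

Lemma prime_contains_J C : min_vertex_cover e C -> ~~ both_ends C ->
  prime_contains J C.
Proof.
move=> Cm nb x /memJ /(_ C Cm) deg2; apply: cdeg_support.
by move: nb deg2; rewrite /both_ends; case: (a.1 \in C); case: (a.2 \in C) => //= _; lia.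
Qed.

Lemma compl_ind_inJ D : (forall C, min_vertex_cover e C ->
    ~~ (C \subset D) \/ both_ends C) -> J (compl_ind D).
Proof.
move=> H; apply/memJ => C Cm; have := cover_meets_edge Cm.1 ha.
case: (H C Cm) => [/cdeg_compl_ind|/andP[-> ->]]; lia.
Qed.

Lemma min_primeJ C : min_prime J C <-> min_vertex_cover e C /\ ~~ both_ends C.
Proof.
split=> [[pC minC]|[Cm nb]]; last first.
  split; first exact: prime_contains_J.
  move=> D DC /compl_ind_notin; apply; apply: compl_ind_inJ => C' C'm; left.
  by apply/negP => /(cover_superset C'm.1) /(Cm.2 D DC).
have [[C' [C'm nb sub]]|none] := classic (exists C',
    [/\ min_vertex_cover e C', ~~ both_ends C' & C' \subset C]).
  have [<- //|neq] := eqVneq C' C.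
  by exfalso; apply: (minC C'); [rewrite properEneq neq sub | exact: prime_contains_J].
exfalso; apply: (compl_ind_notin pC); apply: compl_ind_inJ => C' C'm.
have [|nb] := boolP (both_ends C'); [by right | left].
by apply/negP => sub; apply: none; exists C'.
Qed.

End ColonByEdge.

Theorem lemma3p3 (n : nat) (e : rel 'I_n) (hG : simple_graph e)
  (s : nat) (hs : 1 <= s)
  (a : 'I_n * 'I_n) (rest : seq ('I_n * 'I_n))
  (ha : e a.1 a.2) (hrest : all (fun ij => e ij.1 ij.2) rest)
  (hsize : size rest = s.-1) :
  forall m : mono n,
    colon (edge_symb e s.+1) (edges_prod (a :: rest)) m <->
    colon (sqfree_symb (colon (edge_symb e 2) (edge_mono a)) s) (edges_prod rest) m.
Proof.
move=> m; rewrite /colon /edge_symb /sqfree_symb edges_prod_cons.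
split=> [H C /(min_primeJ ha) [Cm nb] | H C Cm]; rewrite primepowE.
  (* C misses an endpoint of a, so e_a contributes exactly one to the degree *)
  move: (H C Cm) (cover_meets_edge Cm.1 ha) nb.
  rewrite primepowE /both_ends !(cdeg_mul C m) (cdeg_mul C (edge_mono a)) cdeg_edge.
  by case: (a.1 \in C); case: (a.2 \in C) => //=; lia.
have deg_a := cover_meets_edge Cm.1 ha.
rewrite (cdeg_mul C m) (cdeg_mul C (edge_mono a)) cdeg_edge.
have [/andP[-> ->]|nb] := boolP (both_ends a C).
  (* both endpoints in C: the s-1 other edges complete the degree *)
  by have := cover_cdeg_edges Cm.1 hrest; rewrite hsize; lia.
(* otherwise C is a minimal prime of J, so m * (e_2 ... e_s) has degree >= s *)
have := H C ((min_primeJ ha C).2 (conj Cm nb)); rewrite primepowE cdeg_mul addnCA.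
exact: leq_add deg_a.
Qed.
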